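(* Consider the infinite-horizon model below and suppose $\epsilon_2\ge0$; fix all parameters other than $\epsilon_1$. (i) There exists $\bar{\epsilon}_{RPE}\in[-\infty,\infty)$ such that for every $\epsilon_1\in\mathbb{R}$, the infinite-horizon model admits an infinite-horizon RPE if and only if $\epsilon_1\ge\bar{\epsilon}_{RPE}$, and the Euler-equation model (same $\beta,\sigma,\lambda,\mu,\psi,p,q,\epsilon_2$) admits an Euler-equation RPE if and only if $\epsilon_1\ge\bar{\epsilon}_{RPE}$; moreover $\bar{\epsilon}_{RPE}=-\infty$ if $q=1$. (ii) Let $\bar{\epsilon}_{REE}\in[-\infty,\infty)$ be the number such that the Euler-equation model admits a rational expectations equilibrium (REE) if and only if $\epsilon_1\ge\bar{\epsilon}_{REE}$. Then $\bar{\epsilon}_{REE}\ge\bar{\epsilon}_{RPE}$ if and only if $p+q\ge1$.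
   Context: Parameters: $0<\beta<1$, $\xi\in(0,1)$, $\lambda:=(1-\xi\beta)(1-\xi)/\xi$, $\sigma,\mu>0$, $\psi>1$, $p,q\in(0,1]$ with $(p,q)\neq(1,1)$. The shock $\epsilon_t$ is a two-state Markov chain on $\{\epsilon_1,\epsilon_2\}$ with $\Pr(\epsilon_{t+1}=\epsilon_1\mid\epsilon_t=\epsilon_1)=p$, $\Pr(\epsilon_{t+1}=\epsilon_2\mid\epsilon_t=\epsilon_2)=q$; $\bar q:=(1-p)/(2-p-q)$. Infinite-horizon model: $x_t=-\sigma i_t+\hat E_t\sum_{T\ge t}\beta^{T-t}\big((1-\beta)x_{T+1}+\sigma\pi_{T+1}-\sigma\beta i_{T+1}+\epsilon_T\big)$, $\pi_t=\lambda x_t+\hat E_t\sum_{T\ge t}(\xi\beta)^{T-t}\big(\xi\beta\lambda x_{T+1}+(1-\xi)\beta\pi_{T+1}\big)$, $i_t=\max\{\psi\pi_t,-\mu\}$. An infinite-horizon RPE is a state-contingent vector $(x_j,\pi_j,i_j)$, $j=1,2$, such that the three equations hold in each state $j$ when $\epsilon_t=\epsilon_j$ is observed and agents set $\hat E_t z_T=E(z):=\bar q z_2+(1-\bar q)z_1$ for all $T>t$ and $z\in\{x,\pi,i,\epsilon\}$. Euler-equation model: $x_t=\hat E_t x_{t+1}-\sigma(i_t-\hat E_t\pi_{t+1})+\epsilon_t$, $\pi_t=\lambda x_t+\beta\hat E_t\pi_{t+1}$, $i_t=\max\{\psi\pi_t,-\mu\}$. For $Y_j=(x_j,\pi_j)$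 and forecasts $Y^e_j=(x^e_j,\pi^e_j)$, $j=1,2$, $(Y_1,Y_2)$ solves the Euler model given the forecasts if $x_j=x^e_j-\sigma(\max\{\psi\pi_j,-\mu\}-\pi^e_j)+\epsilon_j$, $\pi_j=\lambda x_j+\beta\pi^e_j$ for $j=1,2$. An Euler-equation RPE uses $Y^e_1=Y^e_2=\bar qY_2+(1-\bar q)Y_1$; an REE uses $Y^e_1=pY_1+(1-p)Y_2$, $Y^e_2=(1-q)Y_1+qY_2$. *)

From Stdlib Require Import Reals.
From Coquelicot Require Import Coquelicot.
Open Scope R_scope.

Definition lam (beta xi : R) : R := (1 - xi * beta) * (1 - xi) / xi.

Definition qbar (p q : R) : R := (1 - p) / (2 - p - q).

Definition Ebar (p q z1 z2 : R) : R := qbar p q * z2 + (1 - qbar p q) * z1.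

(* The three equations of the infinite-horizon model in one state, in which the
   observed shock is ej, and agents forecast every future (T > t) value of
   x, pi, i, eps by Ex, Epi, Ei, Eeps.  The infinite sums are Coquelicot series
   over k = T - t >= 0; the term k = 0 contains the observed shock eps_t = ej. *)
Definition IH_state (beta xi sigma mu psi : R)
    (ej x pi i Ex Epi Ei Eeps : R) : Prop :=
  x = - sigma * i
      + Series (fun k => beta ^ k *
          ((1 - beta) * Ex + sigma * Epi - sigma * beta * Ei
           + match k with O => ej | S _ => Eeps end))
  /\ pi = lam beta xi * x
      + Series (fun k => (xi * beta) ^ k *
          (xi * beta * lam beta xi * Ex + (1 - xi) * beta * Epi))
  /\ i = Rmax (psi * pi) (- mu).

Definition IH_RPE_exists (beta xi sigma mu psi p q e1 e2 : R) : Prop :=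
  exists x1 pi1 i1 x2 pi2 i2 : R,
    let Ex := Ebar p q x1 x2 in
    let Epi := Ebar p q pi1 pi2 in
    let Ei := Ebar p q i1 i2 in
    let Eeps := Ebar p q e1 e2 in
    IH_state beta xi sigma mu psi e1 x1 pi1 i1 Ex Epi Ei Eeps /\
    IH_state beta xi sigma mu psi e2 x2 pi2 i2 Ex Epi Ei Eeps.

Definition Euler_solves (beta xi sigma mu psi e1 e2 : R)
    (x1 pi1 x2 pi2 xe1 pie1 xe2 pie2 : R) : Prop :=
  x1 = xe1 - sigma * (Rmax (psi * pi1) (- mu) - pie1) + e1 /\
  pi1 = lam beta xi * x1 + beta * pie1 /\
  x2 = xe2 - sigma * (Rmax (psi * pi2) (- mu) - pie2) + e2 /\
  pi2 = lam beta xi * x2 + beta * pie2.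

Definition Euler_RPE_exists (beta xi sigma mu psi p q e1 e2 : R) : Prop :=
  exists x1 pi1 x2 pi2 : R,
    Euler_solves beta xi sigma mu psi e1 e2 x1 pi1 x2 pi2
      (Ebar p q x1 x2) (Ebar p q pi1 pi2) (Ebar p q x1 x2) (Ebar p q pi1 pi2).

Definition Euler_REE_exists (beta xi sigma mu psi p q e1 e2 : R) : Prop :=
  exists x1 pi1 x2 pi2 : R,
    Euler_solves beta xi sigma mu psi e1 e2 x1 pi1 x2 pi2
      (p * x1 + (1 - p) * x2) (p * pi1 + (1 - p) * pi2)
      ((1 - q) * x1 + q * x2) ((1 - q) * pi1 + q * pi2).

(* Eliminating output, an equilibrium of the Euler-equation model whose forecasts
   come from a stochastic matrix is a pair (u, v) of state inflation rates with
     λ ε1 = c g(u) - a1 (v - u),    λ ε2 = c g(v) + a2 (v - u),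
   where c = λσ and g(π) = max(ψπ, -μ) - π is convex.  The RPE has the gains
   (q̄ (1 + c), (1 - q̄) (1 + c)); the REE has these gains multiplied by
   r = (2 - p - q)(1 - β(p + q - 1) + c)/(1 + c), and r <= 1 exactly when p + q >= 1.
   Under the RPE all forecasts equal one number b, and the system becomes a scalar
   equation resid b = 0 with resid continuous, piecewise linear with two kinks and
   tending to -∞.  Hence solvability is monotone in the shocks and, for q < 1,
   amounts to resid being nonnegative at one of its kinks, which gives an explicit
   threshold for ε1; for q = 1 an RPE exists for every ε1.  The infinite-horizon
   RPE agrees with the Euler one because RPE forecasts make the discounted sums
   geometric.  If r <= 1, convexity of g turns every REE into an RPE at a lower
   shock, so REE ⊆ RPE; if r > 1, the REE with one state exactly at the ZLB kink
   occurs at a shock strictly below the RPE threshold. *)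

From Stdlib Require Import Reals Psatz.
From Coquelicot Require Import Coquelicot.
Open Scope R_scope.

Lemma Series_geom_scal (r d : R) : Rabs r < 1 ->
  Series (fun k => r ^ k * d) = d / (1 - r).
Proof.
  intros hr. apply is_series_unique.
  assert (hr1 : r <> 1) by (intros ->; rewrite Rabs_R1 in hr; lra).
  replace (d / (1 - r)) with (/ (1 - r) * d) by (field; lra).
  exact (is_series_scal_r d _ _ (is_series_geom r hr)).
Qed.

Lemma Series_geom_head (r d a b : R) : Rabs r < 1 ->
  Series (fun k => r ^ k * (d + match k with O => a | S _ => b end))
  = a - b + (d + b) / (1 - r).
Proof.
  intros hr. apply is_series_unique, is_series_decr_1.
  assert (hr1 : r <> 1) by (intros ->; rewrite Rabs_R1 in hr; lra).
  match goal with
  | |- is_series _ ?L =>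
      replace L with (/ (1 - r) * (r * (d + b))) by (unfold plus, opp; simpl; field; lra)
  end.
  eapply is_series_ext;
    [| exact (is_series_scal_r (r * (d + b)) _ _ (is_series_geom r hr))].
  intros n. simpl. ring.
Qed.

Lemma Rmin_le_iff (a b x : R) : Rmin a b <= x <-> a <= x \/ b <= x.
Proof. unfold Rmin. destruct (Rle_dec a b); split; intros H; try destruct H; lra. Qed.

Lemma continuity_Rmin (f g : R -> R) :
  continuity f -> continuity g -> continuity (fun x => Rmin (f x) (g x)).
Proof.
  intros hf hg.
  assert (E : forall a b, Rmin a b = (a + b - Rabs (a - b)) / 2).
  { intros a b. unfold Rmin. destruct (Rle_dec a b).
    - rewrite Rabs_left1 by lra. field.
    - rewrite Rabs_right by lra. field. }
  intros x. eapply continuity_pt_ext; [intros y; symmetry; apply E|].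
  apply continuity_pt_mult; [|apply continuity_pt_const; intros ? ?; reflexivity].
  apply continuity_pt_minus; [apply continuity_pt_plus; auto|].
  apply (continuity_pt_comp (fun y => f y - g y) Rabs).
  - apply continuity_pt_minus; auto.
  - apply Rcontinuity_abs.
Qed.

Lemma affine_le_Rmax (s t a b x : R) :
  a <= x <= b -> s * x + t <= Rmax (s * a + t) (s * b + t).
Proof.
  intros hx. destruct (Rle_dec 0 s).
  - eapply Rle_trans; [|apply Rmax_r]. nra.
  - eapply Rle_trans; [|apply Rmax_l]. nra.
Qed.

Lemma Rmax_convex (t a b a' b' : R) : 0 <= t <= 1 ->
  Rmax (t * a + (1 - t) * b) (t * a' + (1 - t) * b')
  <= t * Rmax a a' + (1 - t) * Rmax b b'.
Proof.
  intros ht. pose proof (Rmax_l a a'). pose proof (Rmax_r a a').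
  pose proof (Rmax_l b b'). pose proof (Rmax_r b b').
  apply Rmax_lub; nra.
Qed.

Lemma Rbar_le_of_upper_sets (a b : Rbar) : a <> p_infty ->
  (forall x : R, Rbar_le a x -> Rbar_le b x) -> Rbar_le b a.
Proof.
  intros ha hab. destruct a as [a| |]; [| easy |].
  - apply hab. simpl. lra.
  - destruct b as [b| |]; [| exact (hab 0 I) | easy].
    specialize (hab (b - 1) I). simpl in hab. lra.
Qed.

Lemma lam_pos (beta xi : R) : 0 < beta < 1 -> 0 < xi < 1 -> 0 < lam beta xi.
Proof.
  intros hb hx. unfold lam. apply Rdiv_lt_0_compat; [apply Rmult_lt_0_compat|]; nra.
Qed.

Lemma Ebar_congr (p q z1 z2 y1 y2 : R) :
  z1 = y1 -> z2 = y2 -> Ebar p q z1 z2 = Ebar p q y1 y2.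
Proof. now intros -> ->. Qed.

Section InfiniteHorizon.

Variables beta xi sigma mu psi : R.
Hypotheses (hbeta : 0 < beta < 1) (hxi : 0 < xi < 1).

Lemma IH_state_iff (ej x pi i Ex Epi Ei Eeps : R) :
  IH_state beta xi sigma mu psi ej x pi i Ex Epi Ei Eeps <->
  (1 - beta) * (x + sigma * i)
    = (1 - beta) * Ex + sigma * Epi - sigma * beta * Ei + (1 - beta) * ej + beta * Eeps
  /\ (1 - xi * beta) * (pi - lam beta xi * x)
    = xi * beta * lam beta xi * Ex + (1 - xi) * beta * Epi
  /\ i = Rmax (psi * pi) (- mu).
Proof.
  assert (hb : Rabs beta < 1) by (rewrite Rabs_pos_eq; lra).
  assert (hxb : Rabs (xi * beta) < 1) by (rewrite Rabs_pos_eq; nra).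
  unfold IH_state. rewrite Series_geom_head, Series_geom_scal by assumption.
  set (l := lam beta xi).
  split; intros (H1 & H2 & H3); (split; [|split]); trivial.
  - rewrite H1. field. lra.
  - rewrite H2. field. nra.
  - apply (Rmult_eq_reg_l (1 - beta)); [|lra].
    replace ((1 - beta) * x)
      with ((1 - beta) * (x + sigma * i) - (1 - beta) * sigma * i) by ring.
    rewrite H1. field. lra.
  - apply (Rmult_eq_reg_l (1 - xi * beta)); [|nra].
    replace ((1 - xi * beta) * pi)
      with ((1 - xi * beta) * (pi - l * x) + (1 - xi * beta) * l * x) by ring.
    rewrite H2. field. nra.
Qed.

(* The hypotheses are the state equations averaged with the weights q̄, which
   hold in either model (see the consistency lemmas below). *)
Lemma IH_state_iff_Euler (Ex Epi Ei Eeps : R) :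
  sigma * Ei = sigma * Epi + Eeps -> lam beta xi * Ex = (1 - beta) * Epi ->
  forall ej x pi i : R,
  IH_state beta xi sigma mu psi ej x pi i Ex Epi Ei Eeps <->
  x = Ex - sigma * (i - Epi) + ej /\ pi = lam beta xi * x + beta * Epi
  /\ i = Rmax (psi * pi) (- mu).
Proof.
  intros hi hx ej x pi i. rewrite IH_state_iff.
  assert (hbi : beta * (sigma * Ei) = beta * (sigma * Epi + Eeps)) by now rewrite hi.
  assert (hxb : xi * beta * (lam beta xi * Ex) = xi * beta * ((1 - beta) * Epi))
    by now rewrite hx.
  split; intros (H1 & H2 & H3); (split; [|split]); trivial.
  - apply (Rmult_eq_reg_l (1 - beta)); lra.
  - apply (Rmult_eq_reg_l (1 - xi * beta)); [|nra]. lra.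
  - rewrite H1. lra.
  - rewrite H2. lra.
Qed.

Lemma IH_RPE_consistency (p q e1 e2 x1 pi1 i1 x2 pi2 i2 : R) :
  let Ex := Ebar p q x1 x2 in let Epi := Ebar p q pi1 pi2 in
  let Ei := Ebar p q i1 i2 in let Eeps := Ebar p q e1 e2 in
  IH_state beta xi sigma mu psi e1 x1 pi1 i1 Ex Epi Ei Eeps ->
  IH_state beta xi sigma mu psi e2 x2 pi2 i2 Ex Epi Ei Eeps ->
  sigma * Ei = sigma * Epi + Eeps /\ lam beta xi * Ex = (1 - beta) * Epi.
Proof.
  intros Ex Epi Ei Eeps. rewrite !IH_state_iff.
  intros (Hx1 & Hp1 & _) (Hx2 & Hp2 & _).
  pose proof (Ebar_congr p q _ _ _ _ Hx1 Hx2) as Hx.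
  pose proof (Ebar_congr p q _ _ _ _ Hp1 Hp2) as Hp.
  unfold Ex, Epi, Ei, Eeps, Ebar in *. split; lra.
Qed.

Lemma Euler_RPE_consistency (p q e1 e2 x1 pi1 x2 pi2 : R) :
  let Ex := Ebar p q x1 x2 in let Epi := Ebar p q pi1 pi2 in
  Euler_solves beta xi sigma mu psi e1 e2 x1 pi1 x2 pi2 Ex Epi Ex Epi ->
  sigma * Ebar p q (Rmax (psi * pi1) (- mu)) (Rmax (psi * pi2) (- mu))
    = sigma * Epi + Ebar p q e1 e2
  /\ lam beta xi * Ex = (1 - beta) * Epi.
Proof.
  intros Ex Epi (Hx1 & Hp1 & Hx2 & Hp2).
  pose proof (Ebar_congr p q _ _ _ _ Hx1 Hx2) as Hx.
  pose proof (Ebar_congr p q _ _ _ _ Hp1 Hp2) as Hp.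
  unfold Ex, Epi, Ebar in *. split; lra.
Qed.

Lemma IH_RPE_iff_Euler_RPE (p q e1 e2 : R) :
  IH_RPE_exists beta xi sigma mu psi p q e1 e2 <->
  Euler_RPE_exists beta xi sigma mu psi p q e1 e2.
Proof.
  split.
  - intros (x1 & pi1 & i1 & x2 & pi2 & i2 & H1 & H2).
    destruct (IH_RPE_consistency _ _ _ _ _ _ _ _ _ _ H1 H2) as [hi hx].
    rewrite (IH_state_iff_Euler _ _ _ _ hi hx) in H1, H2.
    destruct H1 as (Hx1 & Hp1 & ->). destruct H2 as (Hx2 & Hp2 & ->).
    now exists x1, pi1, x2, pi2.
  - intros (x1 & pi1 & x2 & pi2 & H).
    destruct (Euler_RPE_consistency _ _ _ _ _ _ _ _ H) as [hi hx].
    destruct H as (Hx1 & Hp1 & Hx2 & Hp2).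
    exists x1, pi1, (Rmax (psi * pi1) (- mu)), x2, pi2, (Rmax (psi * pi2) (- mu)).
    cbv zeta. rewrite !(IH_state_iff_Euler _ _ _ _ hi hx). tauto.
Qed.

End InfiniteHorizon.

Definition rate_gap (mu psi x : R) : R := Rmax (psi * x) (- mu) - x.

Lemma rate_gap_convex (mu psi t a b : R) : 0 <= t <= 1 ->
  rate_gap mu psi (t * a + (1 - t) * b)
  <= t * rate_gap mu psi a + (1 - t) * rate_gap mu psi b.
Proof.
  intros ht. unfold rate_gap.
  pose proof (Rmax_convex t (psi * a) (psi * b) (- mu) (- mu) ht).
  replace (psi * (t * a + (1 - t) * b)) with (t * (psi * a) + (1 - t) * (psi * b)) by ring.
  replace (- mu) with (t * - mu + (1 - t) * - mu) at 1 by ring.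
  lra.
Qed.

(* [u], [v]: inflation in states 1 and 2; [s1], [s2]: the shocks scaled by λ;
   [a1], [a2]: the feedback gains of the forecast rule, see [Euler_markov_iff]. *)
Definition pi_system (c mu psi a1 a2 s1 s2 : R) : Prop :=
  exists u v : R,
    s1 = c * rate_gap mu psi u - a1 * (v - u) /\
    s2 = c * rate_gap mu psi v + a2 * (v - u).

(* Forecasts given by the stochastic matrix [[a, 1 - a]; [1 - b, b]]: the RPE is
   [a = 1 - q̄], [b = q̄] and the REE is [a = p], [b = q]. *)
Lemma Euler_markov_iff (beta xi sigma mu psi a b e1 e2 : R) : lam beta xi <> 0 ->
  let M := 1 - beta * (a + b - 1) + lam beta xi * sigma in
  (exists x1 pi1 x2 pi2 : R,
     Euler_solves beta xi sigma mu psi e1 e2 x1 pi1 x2 pi2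
       (a * x1 + (1 - a) * x2) (a * pi1 + (1 - a) * pi2)
       ((1 - b) * x1 + b * x2) ((1 - b) * pi1 + b * pi2))
  <-> pi_system (lam beta xi * sigma) mu psi ((1 - a) * M) ((1 - b) * M)
        (lam beta xi * e1) (lam beta xi * e2).
Proof.
  intros hl M. unfold Euler_solves, pi_system, rate_gap, M.
  set (l := lam beta xi) in *.
  split.
  - intros (x1 & pi1 & x2 & pi2 & Hx1 & Hp1 & Hx2 & Hp2).
    exists pi1, pi2.
    assert (X1 : x1 = (pi1 - beta * (a * pi1 + (1 - a) * pi2)) / l)
      by (apply (Rmult_eq_reg_l l); [field_simplify; lra | exact hl]).
    assert (X2 : x2 = (pi2 - beta * ((1 - b) * pi1 + b * pi2)) / l)
      by (apply (Rmult_eq_reg_l l); [field_simplify; lra | exact hl]).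
    assert (E1 : e1 = x1 - (a * x1 + (1 - a) * x2)
                    + sigma * (Rmax (psi * pi1) (- mu) - (a * pi1 + (1 - a) * pi2))) by lra.
    assert (E2 : e2 = x2 - ((1 - b) * x1 + b * x2)
                    + sigma * (Rmax (psi * pi2) (- mu) - ((1 - b) * pi1 + b * pi2))) by lra.
    rewrite E1, E2, X1, X2. split; field; exact hl.
  - intros (u & v & H1 & H2).
    exists ((u - beta * (a * u + (1 - a) * v)) / l), u,
           ((v - beta * ((1 - b) * u + b * v)) / l), v.
    assert (E1 : e1 = l * e1 / l) by (field; exact hl).
    assert (E2 : e2 = l * e2 / l) by (field; exact hl).
    rewrite H1 in E1. rewrite H2 in E2. rewrite E1, E2.
    repeat split; field; exact hl.
Qed.

Section ZeroLowerBound.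

Variables c mu psi : R.
Hypotheses (hc : 0 < c) (hmu : 0 < mu) (hpsi : 1 < psi).

Definition pi_zlb : R := - mu / psi.

Definition phi (x : R) : R := x + c * Rmax (psi * x) (- mu).

Definition phi_inv (y : R) : R := Rmin (y / (1 + c * psi)) (y + c * mu).

Lemma psi_pi_zlb : psi * pi_zlb = - mu.
Proof. unfold pi_zlb. field. lra. Qed.

Lemma pi_zlb_bounds : - mu < pi_zlb < 0.
Proof. pose proof psi_pi_zlb. split; nra. Qed.

Lemma phi_pi_zlb : phi pi_zlb = pi_zlb - c * mu.
Proof. unfold phi. rewrite psi_pi_zlb, Rmax_right; lra. Qed.

Lemma phi_inv_low (y : R) : y <= phi pi_zlb -> phi_inv y = y + c * mu.
Proof.
  rewrite phi_pi_zlb. intros hy. apply Rmin_right, Rle_div_r; [nra|].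
  assert (c * psi * (y + c * mu) <= c * psi * pi_zlb) by (apply Rmult_le_compat_l; nra).
  pose proof psi_pi_zlb. nra.
Qed.

Lemma phi_inv_high (y : R) : phi pi_zlb <= y -> phi_inv y = y / (1 + c * psi).
Proof.
  rewrite phi_pi_zlb. intros hy. apply Rmin_left, Rle_div_l; [nra|].
  assert (c * psi * pi_zlb <= c * psi * (y + c * mu)) by (apply Rmult_le_compat_l; nra).
  pose proof psi_pi_zlb. nra.
Qed.

Lemma phi_invK (y : R) : phi (phi_inv y) = y.
Proof.
  pose proof psi_pi_zlb. pose proof pi_zlb_bounds. pose proof phi_pi_zlb.
  unfold phi. destruct (Rle_dec y (phi pi_zlb)) as [hy|hy].
  - rewrite phi_inv_low by exact hy. rewrite Rmax_right; [ring|].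
    assert (psi * (y + c * mu) <= psi * pi_zlb) by (apply Rmult_le_compat_l; lra). lra.
  - rewrite phi_inv_high by lra. rewrite Rmax_left; [field; nra|].
    assert (pi_zlb * (1 + c * psi) = pi_zlb - c * mu) by (unfold pi_zlb; field; lra).
    assert (pi_zlb <= y / (1 + c * psi)) by (apply (Rle_div_r pi_zlb y); nra).
    nra.
Qed.

Lemma phiK (x : R) : phi_inv (phi x) = x.
Proof.
  pose proof psi_pi_zlb. pose proof phi_pi_zlb.
  destruct (Rle_dec x pi_zlb) as [hx|hx].
  - assert (E : phi x = x - c * mu) by (unfold phi; rewrite Rmax_right; nra).
    rewrite phi_inv_low; lra.
  - assert (E : phi x = (1 + c * psi) * x) by (unfold phi; rewrite Rmax_left; nra).
    rewrite phi_inv_high; [rewrite E; field; nra|].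
    assert (c * psi * pi_zlb <= c * psi * x) by (apply Rmult_le_compat_l; nra). nra.
Qed.

Lemma phi_inv_le (y y' : R) : y <= y' -> phi_inv y <= phi_inv y'.
Proof.
  intros hy. unfold phi_inv. apply Rmin_glb.
  - eapply Rle_trans; [apply Rmin_l|]. apply Rmult_le_compat_r; [|lra].
    left. apply Rinv_0_lt_compat. nra.
  - eapply Rle_trans; [apply Rmin_r|]. lra.
Qed.

Lemma phi_inv_le_div (y : R) : phi_inv y <= y / (1 + c * psi).
Proof. apply Rmin_l. Qed.

Lemma continuity_phi_inv : continuity phi_inv.
Proof. apply continuity_Rmin; intros x; apply derivable_continuous_pt; reg. Qed.

Lemma rate_gap_low (x : R) : x <= pi_zlb -> rate_gap mu psi x = - mu - x.
Proof.
  intros hx. pose proof psi_pi_zlb. unfold rate_gap.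
  rewrite Rmax_right; [ring|].
  assert (psi * x <= psi * pi_zlb) by (apply Rmult_le_compat_l; lra). lra.
Qed.

Lemma rate_gap_high (x : R) : pi_zlb <= x -> rate_gap mu psi x = (psi - 1) * x.
Proof.
  intros hx. pose proof psi_pi_zlb. unfold rate_gap.
  rewrite Rmax_left; [ring|].
  assert (psi * pi_zlb <= psi * x) by (apply Rmult_le_compat_l; lra). lra.
Qed.

(* The state-1 shock at which the system with gains [r * a1], [r * a2] has a
   solution with [v] (resp. [u]) exactly at the kink [pi_zlb]. *)
Definition shock_kink_v (a1 a2 s2 r : R) : R :=
  - c * (mu + pi_zlb) + (c - r * a1) * (s2 + c * (mu + pi_zlb)) / (r * a2).

Definition shock_kink_u (a1 a2 s2 r : R) : R :=
  - c * (mu + pi_zlb)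
  - r * a1 * (s2 - c * (psi - 1) * pi_zlb) / (c * (psi - 1) + r * a2).

Lemma pi_system_shock_kink_v (a1 a2 s2 r : R) : 0 < r -> 0 < a2 -> 0 <= s2 ->
  pi_system c mu psi (r * a1) (r * a2) (shock_kink_v a1 a2 s2 r) s2.
Proof.
  intros hr ha2 hs2. pose proof pi_zlb_bounds.
  set (d := (s2 + c * (mu + pi_zlb)) / (r * a2)).
  assert (hd : 0 <= d) by (apply Rdiv_le_0_compat; nra).
  exists (pi_zlb - d), pi_zlb.
  rewrite !rate_gap_low by lra. unfold shock_kink_v, d. split; field; nra.
Qed.

Lemma pi_system_shock_kink_u (a1 a2 s2 r : R) : 0 < r -> 0 <= a2 -> 0 <= s2 ->
  pi_system c mu psi (r * a1) (r * a2) (shock_kink_u a1 a2 s2 r) s2.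
Proof.
  intros hr ha2 hs2. pose proof pi_zlb_bounds.
  assert (hK : 0 < c * (psi - 1)) by (apply Rmult_lt_0_compat; lra).
  assert (c * (psi - 1) * pi_zlb < 0) by nra.
  set (d := (s2 - c * (psi - 1) * pi_zlb) / (c * (psi - 1) + r * a2)).
  assert (hd : 0 <= d) by (apply Rdiv_le_0_compat; nra).
  exists pi_zlb, (pi_zlb + d).
  rewrite rate_gap_low, rate_gap_high by lra. unfold shock_kink_u, d. split; field; nra.
Qed.

Lemma shock_kink_v_lt (a1 a2 s2 r : R) : 1 < r -> 0 < a2 -> 0 <= s2 ->
  shock_kink_v a1 a2 s2 r < shock_kink_v a1 a2 s2 1.
Proof.
  intros hr ha2 hs2. pose proof pi_zlb_bounds.
  assert (E : shock_kink_v a1 a2 s2 r - shock_kink_v a1 a2 s2 1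
              = - (c * (s2 + c * (mu + pi_zlb)) * (r - 1) / (r * a2)))
    by (unfold shock_kink_v; field; lra).
  assert (0 < c * (s2 + c * (mu + pi_zlb)) * (r - 1) / (r * a2))
    by (apply Rdiv_lt_0_compat; repeat apply Rmult_lt_0_compat; nra).
  lra.
Qed.

Lemma shock_kink_u_lt (a1 a2 s2 r : R) : 1 < r -> 0 < a1 -> 0 <= a2 -> 0 <= s2 ->
  shock_kink_u a1 a2 s2 r < shock_kink_u a1 a2 s2 1.
Proof.
  intros hr ha1 ha2 hs2. pose proof pi_zlb_bounds.
  set (K := c * (psi - 1)).
  assert (hK : 0 < K) by (unfold K; apply Rmult_lt_0_compat; lra).
  assert (K * pi_zlb < 0) by nra.
  assert (E : shock_kink_u a1 a2 s2 r - shock_kink_u a1 a2 s2 1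
              = - (a1 * (s2 - K * pi_zlb) * K * (r - 1) / ((K + r * a2) * (K + a2))))
    by (unfold shock_kink_u; fold K; field; nra).
  assert (0 < a1 * (s2 - K * pi_zlb) * K * (r - 1) / ((K + r * a2) * (K + a2)))
    by (apply Rdiv_lt_0_compat; repeat apply Rmult_lt_0_compat; nra).
  lra.
Qed.

Lemma pi_system_swap (a1 a2 s1 s2 : R) :
  pi_system c mu psi a1 a2 s1 s2 -> pi_system c mu psi a2 a1 s2 s1.
Proof. intros (u & v & H1 & H2). exists v, u. split; lra. Qed.

(* Moving [u] towards [v] by the factor [r] keeps the state-2 equation and, by
   convexity of [rate_gap], lowers the state-1 shock. *)
Lemma pi_system_shrink (a1 a2 r s1 s2 u v : R) : 0 <= r <= 1 -> 0 <= a1 ->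
  rate_gap mu psi v <= rate_gap mu psi u ->
  s1 = c * rate_gap mu psi u - r * a1 * (v - u) ->
  s2 = c * rate_gap mu psi v + r * a2 * (v - u) ->
  exists s1', s1' <= s1 /\ pi_system c mu psi a1 a2 s1' s2.
Proof.
  intros hr ha1 hg H1 H2.
  set (u' := r * u + (1 - r) * v).
  pose proof (rate_gap_convex mu psi r u v hr) as hconv. fold u' in hconv.
  assert (hg' : c * rate_gap mu psi u' <= c * rate_gap mu psi u)
    by (apply Rmult_le_compat_l; nra).
  exists (c * rate_gap mu psi u' - a1 * (v - u')). split.
  - rewrite H1. unfold u' at 2. lra.
  - exists u', v. split; [reflexivity|]. rewrite H2. unfold u'. ring.
Qed.

Definition kink (s : R) : R := (phi pi_zlb - s) / (1 + c).

Section Residual.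

Variable w : R.
Hypothesis hw : 0 <= w <= 1.

(* Given the common forecast [b], state-j inflation solves
   [phi π_j = (1 + c) b + s_j]; an RPE is a fixed point [b = w π_2 + (1 - w) π_1]. *)
Definition resid (s1 s2 b : R) : R :=
  w * phi_inv ((1 + c) * b + s2) + (1 - w) * phi_inv ((1 + c) * b + s1) - b.

Lemma pi_system_iff_resid_root (s1 s2 : R) :
  pi_system c mu psi (w * (1 + c)) ((1 - w) * (1 + c)) s1 s2 <->
  exists b, resid s1 s2 b = 0.
Proof.
  split.
  - intros (u & v & H1 & H2). exists ((1 - w) * u + w * v).
    assert (E1 : (1 + c) * ((1 - w) * u + w * v) + s1 = phi u)
      by (unfold phi, rate_gap in *; lra).
    assert (E2 : (1 + c) * ((1 - w) * u + w * v) + s2 = phi v)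
      by (unfold phi, rate_gap in *; lra).
    unfold resid. rewrite E1, E2, !phiK. ring.
  - intros (b & hb). unfold resid in hb.
    set (u := phi_inv ((1 + c) * b + s1)) in hb.
    set (v := phi_inv ((1 + c) * b + s2)) in hb.
    assert (E1 : phi u = (1 + c) * b + s1) by apply phi_invK.
    assert (E2 : phi v = (1 + c) * b + s2) by apply phi_invK.
    exists u, v. unfold phi, rate_gap in *. split; nra.
Qed.

Lemma resid_le_compat (s1 s2 s1' s2' b : R) : s1 <= s1' -> s2 <= s2' ->
  resid s1 s2 b <= resid s1' s2' b.
Proof.
  intros h1 h2. unfold resid.
  assert (phi_inv ((1 + c) * b + s1) <= phi_inv ((1 + c) * b + s1'))
    by (apply phi_inv_le; lra).
  assert (phi_inv ((1 + c) * b + s2) <= phi_inv ((1 + c) * b + s2'))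
    by (apply phi_inv_le; lra).
  nra.
Qed.

Lemma continuity_resid (s1 s2 : R) : continuity (resid s1 s2).
Proof.
  assert (hs : forall s, continuity (fun b => phi_inv ((1 + c) * b + s))).
  { intros s b. apply (continuity_pt_comp (fun b => (1 + c) * b + s)).
    - apply derivable_continuous_pt. reg.
    - apply continuity_phi_inv. }
  intros b. unfold resid.
  apply continuity_pt_minus; [|apply continuity_pt_id].
  apply continuity_pt_plus; apply continuity_pt_mult;
    try (apply continuity_pt_const; intros ? ?; reflexivity); apply hs.
Qed.

Lemma resid_root_of_nonneg (s1 s2 b0 : R) : 0 <= resid s1 s2 b0 ->
  exists b, resid s1 s2 b = 0.
Proof.
  intros hb0.
  set (S := w * s2 + (1 - w) * s1).
  assert (hk : 0 < c * psi - c) by nra.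
  set (B := Rmax b0 (S / (c * psi - c)) + 1).
  assert (hB0 : b0 <= B) by (pose proof (Rmax_l b0 (S / (c * psi - c))); unfold B; lra).
  assert (hBS : S < (c * psi - c) * B).
  { pose proof (Rmax_r b0 (S / (c * psi - c))).
    assert (S = (c * psi - c) * (S / (c * psi - c))) by (field; lra).
    unfold B. nra. }
  assert (hB : resid s1 s2 B < 0).
  { unfold resid.
    pose proof (phi_inv_le_div ((1 + c) * B + s1)).
    pose proof (phi_inv_le_div ((1 + c) * B + s2)).
    assert (E : w * (((1 + c) * B + s2) / (1 + c * psi))
                + (1 - w) * (((1 + c) * B + s1) / (1 + c * psi)) - B
                = (S - (c * psi - c) * B) / (1 + c * psi)) by (unfold S; field; nra).
    assert ((S - (c * psi - c) * B) / (1 + c * psi) < 0) by (apply Rdiv_neg_pos; nra).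
    nra. }
  destruct (IVT_cor (resid s1 s2) b0 B (continuity_resid s1 s2) hB0) as (b & _ & hb).
  - nra.
  - now exists b.
Qed.

Lemma pi_system_rpe_mono (s1 s2 s1' s2' : R) :
  pi_system c mu psi (w * (1 + c)) ((1 - w) * (1 + c)) s1 s2 -> s1 <= s1' -> s2 <= s2' ->
  pi_system c mu psi (w * (1 + c)) ((1 - w) * (1 + c)) s1' s2'.
Proof.
  rewrite !pi_system_iff_resid_root. intros (b & hb) h1 h2.
  apply (resid_root_of_nonneg _ _ b). rewrite <- hb. now apply resid_le_compat.
Qed.

Lemma pi_system_rpe_of_scaled (r s1 s2 : R) : 0 <= r <= 1 ->
  pi_system c mu psi (r * (w * (1 + c))) (r * ((1 - w) * (1 + c))) s1 s2 ->
  pi_system c mu psi (w * (1 + c)) ((1 - w) * (1 + c)) s1 s2.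
Proof.
  intros hr (u & v & H1 & H2).
  destruct (Rle_dec (rate_gap mu psi v) (rate_gap mu psi u)) as [hg|hg].
  - destruct (pi_system_shrink (w * (1 + c)) ((1 - w) * (1 + c)) r s1 s2 u v)
      as (s1' & hs & hsys); try nra.
    apply (pi_system_rpe_mono s1' s2); [exact hsys | lra | lra].
  - destruct (pi_system_shrink ((1 - w) * (1 + c)) (w * (1 + c)) r s2 s1 v u)
      as (s2' & hs & hsys); try nra.
    apply pi_system_swap in hsys.
    apply (pi_system_rpe_mono s1 s2'); [exact hsys | lra | lra].
Qed.

Lemma resid_low (s1 s2 b : R) :
  (1 + c) * b + s2 <= phi pi_zlb -> (1 + c) * b + s1 <= phi pi_zlb ->
  resid s1 s2 b = c * b + (w * s2 + (1 - w) * s1 + c * mu).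
Proof. intros h2 h1. unfold resid. rewrite !phi_inv_low by assumption. ring. Qed.

Lemma resid_high (s1 s2 b : R) :
  phi pi_zlb <= (1 + c) * b + s2 -> phi pi_zlb <= (1 + c) * b + s1 ->
  resid s1 s2 b
  = ((1 + c) / (1 + c * psi) - 1) * b + (w * s2 + (1 - w) * s1) / (1 + c * psi).
Proof. intros h2 h1. unfold resid. rewrite !phi_inv_high by assumption. field. nra. Qed.

Lemma resid_mid (s1 s2 b : R) :
  phi pi_zlb <= (1 + c) * b + s2 -> (1 + c) * b + s1 <= phi pi_zlb ->
  resid s1 s2 b
  = (w * (1 + c) / (1 + c * psi) + (1 - w) * (1 + c) - 1) * b
    + (w * s2 / (1 + c * psi) + (1 - w) * (s1 + c * mu)).
Proof.
  intros h2 h1. unfold resid. rewrite phi_inv_high, phi_inv_low by assumption.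
  field. nra.
Qed.

(* [resid] is affine on each of the three pieces cut out by the kinks, increasing
   on the left one and decreasing on the right one. *)
Lemma resid_le_Rmax_kinks (s1 s2 b : R) : s1 <= s2 ->
  resid s1 s2 b <= Rmax (resid s1 s2 (kink s2)) (resid s1 s2 (kink s1)).
Proof.
  intros hs.
  assert (K2 : (1 + c) * kink s2 + s2 = phi pi_zlb) by (unfold kink; field; lra).
  assert (K1 : (1 + c) * kink s1 + s1 = phi pi_zlb) by (unfold kink; field; lra).
  destruct (Rle_dec ((1 + c) * b + s2) (phi pi_zlb)) as [h2|h2].
  - eapply Rle_trans; [|apply Rmax_l].
    rewrite !resid_low by lra. nra.
  - destruct (Rle_dec (phi pi_zlb) ((1 + c) * b + s1)) as [h1|h1].
    + eapply Rle_trans; [|apply Rmax_r].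
      rewrite !resid_high by lra.
      assert ((1 + c) / (1 + c * psi) - 1 < 0); [|nra].
      apply Rlt_minus, Rlt_div_l; nra.
    + rewrite !resid_mid by lra.
      apply affine_le_Rmax. split; nra.
Qed.

Lemma resid_kink_v (s1 s2 : R) : w < 1 -> s1 <= s2 ->
  resid s1 s2 (kink s2)
  = (1 - w) * (s1 - shock_kink_v (w * (1 + c)) ((1 - w) * (1 + c)) s2 1).
Proof.
  intros hw1 hs. rewrite resid_low by (unfold kink; field_simplify; lra).
  unfold kink, shock_kink_v. rewrite phi_pi_zlb. field. lra.
Qed.

Lemma resid_kink_u (s1 s2 : R) : s1 <= s2 ->
  resid s1 s2 (kink s1)
  = (1 / (1 + c) - w / (1 + c * psi))
    * (s1 - shock_kink_u (w * (1 + c)) ((1 - w) * (1 + c)) s2 1).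
Proof.
  intros hs. rewrite resid_high by (unfold kink; field_simplify; lra).
  unfold kink, shock_kink_u. rewrite phi_pi_zlb. unfold pi_zlb.
  field. repeat split; nra.
Qed.

Lemma shock_kink_v_lt_s2 (s2 : R) : w < 1 -> 0 <= s2 ->
  shock_kink_v (w * (1 + c)) ((1 - w) * (1 + c)) s2 1 < s2.
Proof.
  intros hw1 hs2. pose proof pi_zlb_bounds.
  assert (E : s2 - shock_kink_v (w * (1 + c)) ((1 - w) * (1 + c)) s2 1
              = (s2 + c * (mu + pi_zlb)) / ((1 - w) * (1 + c)))
    by (unfold shock_kink_v; field; lra).
  assert (0 < (s2 + c * (mu + pi_zlb)) / ((1 - w) * (1 + c)))
    by (apply Rdiv_lt_0_compat; nra).
  lra.
Qed.

Lemma pi_system_rpe_threshold (s1 s2 : R) : w < 1 -> 0 <= s2 ->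
  pi_system c mu psi (w * (1 + c)) ((1 - w) * (1 + c)) s1 s2 <->
  Rmin (shock_kink_v (w * (1 + c)) ((1 - w) * (1 + c)) s2 1)
       (shock_kink_u (w * (1 + c)) ((1 - w) * (1 + c)) s2 1) <= s1.
Proof.
  intros hw1 hs2. pose proof (shock_kink_v_lt_s2 s2 hw1 hs2) as hv.
  set (Tv := shock_kink_v _ _ s2 1) in *. set (Tu := shock_kink_u _ _ s2 1).
  rewrite pi_system_iff_resid_root, Rmin_le_iff.
  assert (hroot : (exists b, resid s1 s2 b = 0) <-> exists b, 0 <= resid s1 s2 b).
  { split; intros (b & hb); [exists b; lra | exact (resid_root_of_nonneg s1 s2 b hb)]. }
  rewrite hroot. clear hroot.
  destruct (Rle_dec s2 s1) as [hs|hs].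
  - split; [intros _; left; lra | intros _].
    exists (kink s2). apply Rle_trans with (resid s2 s2 (kink s2)).
    + rewrite resid_kink_v by lra. fold Tv. nra.
    + apply resid_le_compat; lra.
  - set (a := 1 / (1 + c) - w / (1 + c * psi)).
    assert (ha : 0 < a).
    { assert (w / (1 + c * psi) <= 1 / (1 + c * psi))
        by (apply Rmult_le_compat_r; [left; apply Rinv_0_lt_compat; nra | lra]).
      assert (1 / (1 + c * psi) < 1 / (1 + c))
        by (apply Rmult_lt_compat_l; [lra | apply Rinv_lt_contravar; nra]).
      unfold a. lra. }
    split.
    + intros (b & hb).
      pose proof (resid_le_Rmax_kinks s1 s2 b) as hmax.
      rewrite resid_kink_v, resid_kink_u in hmax by lra. fold Tv Tu a in hmax.
      destruct (Rle_dec Tv s1) as [h|h]; [now left | right].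
      destruct (Rle_dec Tu s1) as [h'|h']; [exact h'|].
      assert (Rmax ((1 - w) * (s1 - Tv)) (a * (s1 - Tu)) < 0) by (apply Rmax_lub_lt; nra).
      lra.
    + intros [h|h]; [exists (kink s2) | exists (kink s1)].
      * rewrite resid_kink_v by lra. fold Tv. nra.
      * rewrite resid_kink_u by lra. fold Tu a. nra.
Qed.

Lemma pi_system_rpe_full_weight (s1 s2 : R) : w = 1 -> 0 <= s2 ->
  pi_system c mu psi (w * (1 + c)) ((1 - w) * (1 + c)) s1 s2.
Proof.
  intros hw1 hs2. pose proof pi_zlb_bounds.
  apply pi_system_iff_resid_root, (resid_root_of_nonneg s1 s2 (kink s2)).
  assert (K2 : (1 + c) * kink s2 + s2 = phi pi_zlb) by (unfold kink; field; lra).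
  assert (kink s2 <= pi_zlb) by (unfold kink; rewrite phi_pi_zlb; apply Rle_div_l; nra).
  unfold resid. rewrite K2, phiK, hw1. lra.
Qed.

End Residual.

End ZeroLowerBound.

Definition ebar_RPE (beta xi sigma mu psi p q e2 : R) : Rbar :=
  let c := lam beta xi * sigma in
  let w := qbar p q in
  let s2 := lam beta xi * e2 in
  if Req_EM_T q 1 then m_infty
  else Finite (Rmin (shock_kink_v c mu psi (w * (1 + c)) ((1 - w) * (1 + c)) s2 1)
                    (shock_kink_u c mu psi (w * (1 + c)) ((1 - w) * (1 + c)) s2 1)
               / lam beta xi).

Section Model.

Variables beta xi sigma mu psi p q e2 : R.
Hypotheses (hbeta : 0 < beta < 1) (hxi : 0 < xi < 1) (hsigma : 0 < sigma)
  (hmu : 0 < mu) (hpsi : 1 < psi) (hp : 0 < p <= 1) (hq : 0 < q <= 1)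
  (hpq : ~ (p = 1 /\ q = 1)) (he2 : 0 <= e2).

Local Notation l := (lam beta xi).
Local Notation c := (lam beta xi * sigma).
Local Notation w := (qbar p q).
Local Notation r := ((2 - p - q) * (1 - beta * (p + q - 1) + c) / (1 + c)).

Let hl : 0 < l := lam_pos beta xi hbeta hxi.
Let hc : 0 < c := Rmult_lt_0_compat _ _ hl hsigma.

Lemma pq_lt_two : 0 < 2 - p - q.
Proof. destruct (Rlt_dec 0 (2 - p - q)); [assumption|]. exfalso. apply hpq. lra. Qed.

Lemma qbar_spec : w * (2 - p - q) = 1 - p.
Proof. pose proof pq_lt_two. unfold qbar. field. lra. Qed.

Lemma qbar_bounds : 0 <= w <= 1.
Proof. pose proof pq_lt_two. pose proof qbar_spec. split; nra. Qed.

Lemma Euler_RPE_iff_pi_system (e1 : R) :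
  Euler_RPE_exists beta xi sigma mu psi p q e1 e2 <->
  pi_system c mu psi (w * (1 + c)) ((1 - w) * (1 + c)) (l * e1) (l * e2).
Proof.
  pose proof (Euler_markov_iff beta xi sigma mu psi (1 - w) w e1 e2) as E. cbv zeta in E.
  replace ((1 - (1 - w)) * (1 - beta * (1 - w + w - 1) + c)) with (w * (1 + c)) in E by ring.
  replace ((1 - w) * (1 - beta * (1 - w + w - 1) + c)) with ((1 - w) * (1 + c)) in E by ring.
  rewrite <- E by lra. unfold Euler_RPE_exists, Euler_solves, Ebar.
  split; intros (x1 & pi1 & x2 & pi2 & Hs); exists x1, pi1, x2, pi2; lra.
Qed.

Lemma Euler_REE_iff_pi_system (e1 : R) :
  Euler_REE_exists beta xi sigma mu psi p q e1 e2 <->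
  pi_system c mu psi (r * (w * (1 + c))) (r * ((1 - w) * (1 + c))) (l * e1) (l * e2).
Proof.
  pose proof pq_lt_two.
  pose proof (Euler_markov_iff beta xi sigma mu psi p q e1 e2) as E. cbv zeta in E.
  replace ((1 - p) * (1 - beta * (p + q - 1) + c)) with (r * (w * (1 + c))) in E
    by (unfold qbar; field; lra).
  replace ((1 - q) * (1 - beta * (p + q - 1) + c)) with (r * ((1 - w) * (1 + c))) in E
    by (unfold qbar; field; lra).
  exact (E ltac:(lra)).
Qed.

Lemma ree_scale_le_1 : 1 <= p + q -> 0 <= r <= 1.
Proof.
  intros h. pose proof pq_lt_two.
  assert (0 <= beta * (p + q - 1)) by nra.
  assert (beta * (p + q - 1) < 1) by nra.
  split.
  - apply Rdiv_le_0_compat; [apply Rmult_le_pos|]; lra.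
  - apply Rle_div_l; [lra|].
    assert ((2 - p - q) * (1 - beta * (p + q - 1) + c) <= 1 * (1 - beta * (p + q - 1) + c))
      by (apply Rmult_le_compat_r; lra).
    lra.
Qed.

Lemma ree_scale_gt_1 : p + q < 1 -> 1 < r.
Proof.
  intros h.
  assert (beta * (p + q - 1) < 0) by nra.
  apply Rlt_div_r; nra.
Qed.

Lemma Euler_RPE_iff_threshold (e1 : R) :
  Euler_RPE_exists beta xi sigma mu psi p q e1 e2 <->
  Rbar_le (ebar_RPE beta xi sigma mu psi p q e2) e1.
Proof.
  pose proof qbar_bounds. pose proof pq_lt_two.
  rewrite Euler_RPE_iff_pi_system.
  unfold ebar_RPE. cbv zeta. destruct (Req_EM_T q 1) as [hq1|hq1]; simpl.
  - split; [trivial | intros _].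
    apply pi_system_rpe_full_weight; try nra.
    unfold qbar. rewrite hq1. field. intros hp1. apply hpq. lra.
  - assert (hw1 : w < 1) by (pose proof qbar_spec; assert (q < 1) by lra; nra).
    rewrite pi_system_rpe_threshold, Rle_div_l by (try assumption; nra).
    now rewrite (Rmult_comm e1).
Qed.

Lemma Euler_REE_RPE (e1 : R) : 1 <= p + q ->
  Euler_REE_exists beta xi sigma mu psi p q e1 e2 ->
  Euler_RPE_exists beta xi sigma mu psi p q e1 e2.
Proof.
  intros h. pose proof qbar_bounds.
  rewrite Euler_REE_iff_pi_system, Euler_RPE_iff_pi_system.
  apply pi_system_rpe_of_scaled; try lra. now apply ree_scale_le_1.
Qed.

Lemma Euler_REE_not_RPE : p + q < 1 ->
  exists e1, Euler_REE_exists beta xi sigma mu psi p q e1 e2 /\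
             ~ Euler_RPE_exists beta xi sigma mu psi p q e1 e2.
Proof.
  intros h. pose proof (ree_scale_gt_1 h).
  pose proof pq_lt_two. pose proof qbar_spec.
  assert (hw : 0 < w < 1) by (split; nra).
  assert (hs2 : 0 <= l * e2) by nra.
  assert (ha1 : 0 < w * (1 + c)) by nra.
  assert (ha2 : 0 < (1 - w) * (1 + c)) by nra.
  set (Tv := fun r' => shock_kink_v c mu psi (w * (1 + c)) ((1 - w) * (1 + c)) (l * e2) r').
  set (Tu := fun r' => shock_kink_u c mu psi (w * (1 + c)) ((1 - w) * (1 + c)) (l * e2) r').
  assert (hTv : Tv r < Tv 1) by (apply shock_kink_v_lt; assumption || lra).
  assert (hTu : Tu r < Tu 1) by (apply shock_kink_u_lt; assumption || lra).
  assert (hsys : forall s1, s1 = Tv r \/ s1 = Tu r ->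
            pi_system c mu psi (r * (w * (1 + c))) (r * ((1 - w) * (1 + c))) s1 (l * e2)).
  { intros s1 [-> | ->].
    - apply pi_system_shock_kink_v; assumption || lra.
    - apply pi_system_shock_kink_u; assumption || lra. }
  assert (hlow : exists s1, (s1 = Tv r \/ s1 = Tu r) /\ s1 < Rmin (Tv 1) (Tu 1)).
  { destruct (Rle_dec (Tv 1) (Tu 1)) as [hvu|hvu].
    - exists (Tv r). rewrite Rmin_left by assumption. auto.
    - exists (Tu r). rewrite Rmin_right by lra. auto. }
  destruct hlow as (s1 & hs1 & hlt).
  exists (s1 / l).
  rewrite Euler_REE_iff_pi_system, Euler_RPE_iff_pi_system, pi_system_rpe_threshold
    by (assumption || lra).
  replace (l * (s1 / l)) with s1 by (field; lra).
  split; [now apply hsys | fold (Tv 1) (Tu 1); lra].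
Qed.

End Model.

Theorem proposition9 (beta xi sigma mu psi p q e2 : R)
  (hbeta : 0 < beta < 1) (hxi : 0 < xi < 1)
  (hsigma : 0 < sigma) (hmu : 0 < mu) (hpsi : 1 < psi)
  (hp : 0 < p <= 1) (hq : 0 < q <= 1) (hpq : ~ (p = 1 /\ q = 1))
  (he2 : 0 <= e2) :
  exists ebarRPE : Rbar,
    ebarRPE <> p_infty /\
    (forall e1 : R,
       IH_RPE_exists beta xi sigma mu psi p q e1 e2 <-> Rbar_le ebarRPE e1) /\
    (forall e1 : R,
       Euler_RPE_exists beta xi sigma mu psi p q e1 e2 <-> Rbar_le ebarRPE e1) /\
    (q = 1 -> ebarRPE = m_infty) /\
    (forall ebarREE : Rbar,
       ebarREE <> p_infty ->
       (forall e1 : R,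
          Euler_REE_exists beta xi sigma mu psi p q e1 e2 <-> Rbar_le ebarREE e1) ->
       (Rbar_le ebarRPE ebarREE <-> 1 <= p + q)).
Proof.
  pose proof (Euler_RPE_iff_threshold beta xi sigma mu psi p q e2) as hRPE.
  exists (ebar_RPE beta xi sigma mu psi p q e2).
  split; [|split; [|split; [|split]]].
  - unfold ebar_RPE. now destruct (Req_EM_T q 1).
  - intros e1. rewrite IH_RPE_iff_Euler_RPE by assumption. now apply hRPE.
  - intros e1. now apply hRPE.
  - intros hq1. unfold ebar_RPE. now destruct (Req_EM_T q 1).
  - intros eREE hfin hREE. split.
    + intros hle. destruct (Rle_dec 1 (p + q)) as [h|h]; [exact h|].
      destruct (Euler_REE_not_RPE beta xi sigma mu psi p q e2) as (e1 & hE & hnR);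
        try assumption || lra.
      exfalso. apply hnR, hRPE; try assumption.
      eapply Rbar_le_trans; [exact hle | now apply hREE].
    + intros h. apply Rbar_le_of_upper_sets; [exact hfin|].
      intros e1 he1. apply hRPE; try assumption.
      apply Euler_REE_RPE; try assumption. now apply hREE.
Qed.
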